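(* Assume the capacities satisfy (C1) and (C3). Let $G_N$ be the Poissonian random graph and $G_N'$ a random graph satisfying (A1) and (A2), both with capacities $\{\lambda_i\}$, coupled as described below, and let $\mathcal A_N=\big\{\sum_{i=1}^N K_i\mathbf 1\{\lambda_i>c_N\}=0\big\}$ with $c_N=N^{\xi}$. For each $\xi>0$ there exists a constant $\theta>0$ such that $\mathbb P(\mathcal A_N^c)=O(N^{-\theta})$.
   Context: Capacities $\lambda_1,\dots,\lambda_N>0$ deterministic, $l_N=\sum_i\lambda_i$, $\mu_N=\frac1N\sum_i\lambda_i$, $\nu_N=\sum_i\lambda_i^2/\sum_i\lambda_i$. (C1): there are $\mu\in(0,\infty)$, $\nu\in(1,\infty)$, $\alpha_1>0$ with $|\mu_N-\mu|=O(N^{-\alpha_1})$, $|\nu_N-\nu|=O(N^{-\alpha_1})$. (C3): there is $\tau>3$ such that for every $\varepsilon>0$ (with $\gamma:=\frac1{\tau-1}+\varepsilon<\frac12$), $\limsup_N\frac1N\sum_i\lambda_i^{\tau-1-\varepsilon}<\infty$ and $\max_i\lambda_i\le N^\gamma$. Poissonian random graph: the numbers of edges between distinct nodes $i,j$ are independent Poisson variables with mean $\lambda_i\lambda_j/l_N$; its connection indicator $X_{ij}=\mathbf 1\{\text{at least one edge}\}$ has $p_{ij}=1-e^{-\lambda_i\lambda_j/l_N}$. $G_N'$: edge indicators $X'_{ij}$ independent (A1) with $p'_{ij}=\mathbb P(X'_{ij}=1)=h(\lambda_i\lambda_j/l_N)$, $h:[0,\infty)\to[0,1]$, $h(x)-x=O(x^2)$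 as $x\downarrow0$ (A2). Coupling: independently over pairs $i<j$, with $\underline p_{ij}=\min\{p_{ij},p'_{ij}\}$, $\overline p_{ij}=\max\{p_{ij},p'_{ij}\}$, let $(\hat X_{ij},\hat X'_{ij},K_{ij})$ take values $(1,1,0),(1,0,1),(0,1,1),(0,0,0)$ with probabilities $\underline p_{ij}$, $p_{ij}-\underline p_{ij}$, $\overline p_{ij}-p_{ij}$, $1-\overline p_{ij}$ respectively; $\hat X_{ij}$ and $\hat X'_{ij}$ are used as the connection indicators of $G_N$ and $G_N'$, so $K_{ij}=\mathbf 1\{\hat X_{ij}\ne\hat X'_{ij}\}$ (a mismatch), $K_{ji}=K_{ij}$, and $K_i=\sum_{j\ne i}K_{ij}$. *)

From HB Require Import structures.
From mathcomp Require Import all_boot all_order all_algebra.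
From mathcomp Require Import all_classical all_reals all_analysis.
Set Implicit Arguments. Unset Strict Implicit. Unset Printing Implicit Defensive.
Import Order.TTheory GRing.Theory Num.Theory.
Local Open Scope ring_scope.

Section Coupling.
Variable R : realType.

(* unordered pairs {i,j} of distinct nodes, represented as i < j *)
Definition pairT (N : nat) := {x : 'I_N * 'I_N | (x.1 < x.2)%N}.

Definition lN (N : nat) (lam : 'I_N -> R) : R := \sum_(i < N) lam i.
Definition muN (N : nat) (lam : 'I_N -> R) : R := lN lam / N%:R.
Definition nuN (N : nat) (lam : 'I_N -> R) : R :=
  (\sum_(i < N) lam i ^+ 2) / lN lam.

Definition pP (N : nat) (lam : 'I_N -> R) (i j : 'I_N) : R :=
  1 - expR (- (lam i * lam j / lN lam)).
Definition pA (h : R -> R) (N : nat) (lam : 'I_N -> R) (i j : 'I_N) : R :=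
  h (lam i * lam j / lN lam).

(* Coupling outcome k : 'I_4 for a pair, encoding (Xhat, Xhat', K):
   0 -> (1,1,0), 1 -> (1,0,1), 2 -> (0,1,1), 3 -> (0,0,0) *)
Definition coup_weight (h : R -> R) (N : nat) (lam : 'I_N -> R)
  (i j : 'I_N) (k : 'I_4) : R :=
  let p := pP lam i j in
  let p' := pA h lam i j in
  let lo := Num.min p p' in
  let hi := Num.max p p' in
  match val k with
  | 0 => lo
  | 1 => p - lo
  | 2 => hi - p
  | _ => 1 - hi
  end.

(* configurations of the coupling, independently over pairs i<j *)
Definition config (N : nat) := {ffun pairT N -> 'I_4}.

Definition config_weight (h : R -> R) (N : nat) (lam : 'I_N -> R)
  (w : config N) : R :=
  \prod_(x : pairT N) coup_weight h lam (val x).1 (val x).2 (w x).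

Definition mismatch (k : 'I_4) : bool := (val k == 1%N) || (val k == 2%N).

(* K_ij (symmetric, 0 on the diagonal) *)
Definition Kij (N : nat) (w : config N) (i j : 'I_N) : nat :=
  match @insub _ _ (pairT N) (i, j), @insub _ _ (pairT N) (j, i) with
  | Some x, _ => mismatch (w x)
  | None, Some x => mismatch (w x)
  | None, None => 0%N
  end.

Definition Ki (N : nat) (w : config N) (i : 'I_N) : nat :=
  (\sum_(j < N | j != i) Kij w i j)%N.

Definition A_event (N : nat) (lam : 'I_N -> R) (c : R) (w : config N) : bool :=
  (\sum_(i < N) Ki w i * ((c < lam i)%R : bool))%N == 0%N.

Definition prob_Ac (h : R -> R) (N : nat) (lam : 'I_N -> R) (c : R) : R :=
  \sum_(w : config N) config_weight h lam w * (~~ A_event lam c w)%:R.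

End Coupling.

(* On the complement of A_N some mismatch K_ij = 1 touches a node i with
   lam_i > c_N, so by the union bound P(A_N^c) is at most the sum over such i
   and all j of P(K_ij = 1) = |p_ij - p'_ij|.  Both p_ij and p'_ij equal
   t = lam_i lam_j / l_N up to O(t^2), so the bound is
   O(nu_N / l_N * sum_{lam_i > c_N} lam_i^2).  With a = tau - 1 - eps > 2,
   lam_i^2 <= c_N^(2 - a) lam_i^a on {lam_i > c_N}; (C1) bounds nu_N / mu_N and
   (C3) bounds N^-1 sum_i lam_i^a, which leaves c_N^(2 - a) = N^(-xi (a - 2)). *)
From HB Require Import structures.
From mathcomp Require Import all_boot all_order all_algebra.
From mathcomp Require Import all_classical all_reals all_analysis.
From mathcomp Require Import ring lra.
Import Order.TTheory GRing.Theory Num.Theory.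
Import archimedean.Num.Theory.
Local Open Scope ring_scope.

Lemma sum_prod_ffun_coord {I J : finType} {R : comPzSemiRingType}
    (F : I -> J -> R) (g : J -> R) (x0 : I) :
  (forall x, \sum_k F x k = 1) ->
  \sum_(w : {ffun I -> J}) (\prod_x F x (w x)) * g (w x0) = \sum_k F x0 k * g k.
Proof.
move=> F1.
pose G x k := F x k * (if x == x0 then g k else 1).
transitivity (\sum_(w : {ffun I -> J}) \prod_x G x (w x)).
  apply: eq_bigr => w _; rewrite big_split /=; congr (_ * _).
  by rewrite (bigD1 x0) //= eqxx big1 ?mulr1 // => x /negbTE ->.
rewrite -(bigA_distr_bigA G) (bigD1 x0) //= [X in _ * X]big1 ?mulr1.
  by apply: eq_bigr => k _; rewrite /G eqxx.
move=> x /negbTE x_neq; rewrite -(F1 x).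
by apply: eq_bigr => k _; rewrite /G x_neq mulr1.
Qed.

Lemma Kij_pairT {N : nat} {i j : 'I_N} : i != j -> exists x : pairT N,
  (forall w, Kij w i j = mismatch (w x)) /\ (val x = (i, j) \/ val x = (j, i)).
Proof.
move=> ij; rewrite /Kij.
case: insubP => [x _ xE|ji]; first by exists x; split => //; left.
case: insubP => [x _ xE|ij']; first by exists x; split => //; right.
move: ji ij' ij => /=; rewrite -!leqNgt => ji ij'.
by rewrite -val_eqE /= eqn_leq ji ij'.
Qed.

Lemma abs_1_expRN_sub_le {R : realType} {t : R} :
  0 <= t -> `|1 - expR (- t) - t| <= t ^+ 2.
Proof.
move=> t0.
have lb := expR_ge1Dx (- t).
have expR_ge := expR_ge1Dx t.
(* (1 - t + t^2) (1 + t) = 1 + t^3 >= 1 *)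
have ub : expR (- t) <= 1 - t + t ^+ 2.
  rewrite expRN -[(expR t)^-1]mul1r ler_pdivrMr ?expR_gt0 //.
  have : 0 < 1 - t + t ^+ 2 by nra.
  nra.
rewrite ler_norml; apply/andP; split; lra.
Qed.

(* Near 0 this is (A2) plus [abs_1_expRN_sub_le]; away from 0 both terms lie
   in [0, 1], so their distance is at most 1 <= (t / delta)^2. *)
Lemma expRN_sub_quadratic_bound {R : realType} {h : R -> R} :
  (forall x : R, 0 <= x -> 0 <= h x <= 1) ->
  (exists (C delta : R), 0 < delta /\
     forall x : R, 0 < x -> x < delta -> `|h x - x| <= C * x ^+ 2) ->
  exists K : R, 0 <= K /\
    forall t : R, 0 < t -> `|(1 - expR (- t)) - h t| <= K * t ^+ 2.
Proof.
move=> h01 [C [d [d0 hA]]].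
have dd : 0 <= d^-1 ^+ 2 by rewrite exprn_ge0 // invr_ge0 ltW.
exists (1 + `|C| + d^-1 ^+ 2); split; first by rewrite !addr_ge0.
move=> t t0.
have t2 : 0 <= t ^+ 2 by rewrite exprn_ge0 // ltW.
have Ct : C * t ^+ 2 <= `|C| * t ^+ 2 by rewrite ler_wpM2r // ler_norm.
have et := abs_1_expRN_sub_le (ltW t0).
have dt : 0 <= d^-1 ^+ 2 * t ^+ 2 by rewrite mulr_ge0.
have Ct0 : 0 <= `|C| * t ^+ 2 by rewrite mulr_ge0.
rewrite !mulrDl mul1r.
case: (ltP t d) => td.
  have := ler_distD t (1 - expR (- t)) (h t).
  have := hA t t0 td.
  rewrite (distrC t (h t)); lra.
have /andP[h0 h1] := h01 t (ltW t0).
have e0 := expR_gt0 (- t).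
have e1 : expR (- t) <= 1 by rewrite expR_le1 oppr_le0 ltW.
have td2 : 1 <= d^-1 ^+ 2 * t ^+ 2.
  rewrite -exprMn; apply: exprn_ege1.
  by rewrite -(mulVf (lt0r_neq0 d0)) ler_wpM2l // invr_ge0 ltW.
rewrite ler_norml; apply/andP; split; lra.
Qed.

Lemma indicator_sq_le_powR {R : realType} (c a l : R) :
  0 < c -> 2 <= a -> 0 < l ->
  ((c < l)%R : nat)%:R * l ^+ 2 <= c `^ (2 - a) * l `^ a.
Proof.
move=> c0 a2 l0.
have [cl|_] := ltP c l; last by rewrite mul0r mulr_ge0 ?powR_ge0.
rewrite mul1r -powR_mulrn ?(ltW l0) // -[X in l `^ X](subrK a) powRD; last first.
  by rewrite (gt_eqF l0) implybT.
rewrite ler_wpM2r ?powR_ge0 // -opprB !powRN lef_pV2 ?posrE ?powR_gt0 //.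
by apply: ge0_ler_powR; rewrite ?nnegrE ?subr_ge0 // ltW.
Qed.

Lemma powRN_eventually_le {R : realType} (C alpha e : R) :
  0 < alpha -> 0 < e ->
  exists N0 : nat, forall N : nat, (N0 <= N)%N -> C * N%:R `^ (- alpha) <= e.
Proof.
move=> al0 e0.
pose M := `|C| / e.
have M0 : 0 <= M by rewrite divr_ge0 // ltW.
exists (Num.truncn (M `^ alpha^-1)).+1 => N hN.
have N0 : 0 < N%:R :> R by rewrite ltr0n (leq_trans _ hN).
have MN : M <= N%:R `^ alpha.
  have : M `^ alpha^-1 <= N%:R.
    by apply/ltW/(lt_le_trans (truncnS_gt _)); rewrite ler_nat.
  move=> /(ge0_ler_powR (ltW al0)).
  rewrite !nnegrE powR_ge0 ler0n => /(_ isT isT).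
  by rewrite -powRrM mulVf ?gt_eqF // powRr1.
have Npos : 0 < N%:R `^ alpha by rewrite powR_gt0.
apply: (le_trans (ler_wpM2r (powR_ge0 _ _) (ler_norm C))).
by rewrite powRN ler_pdivrMr // mulrC -ler_pdivrMr.
Qed.

Lemma dist_eventually_le {R : realType} {x : nat -> R} {x0 C alpha : R}
    {N1 : nat} :
  0 < alpha ->
  (forall N : nat, (N1 <= N)%N -> `|x N - x0| <= C * N%:R `^ (- alpha)) ->
  forall e : R, 0 < e ->
  exists N0 : nat, forall N : nat, (N0 <= N)%N -> `|x N - x0| <= e.
Proof.
move=> al0 rate e e0; have [N2 small] := powRN_eventually_le C alpha e al0 e0.
exists (maxn N1 N2) => N; rewrite geq_max => /andP[hN1 hN2].
exact: le_trans (rate N hN1) (small N hN2).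
Qed.

Lemma exists_C3_margin {R : realType} {tau : R} : 3 < tau ->
  exists eps : R, [/\ 0 < eps, (tau - 1)^-1 + eps < 2^-1 & 2 < tau - 1 - eps].
Proof.
move=> tau3; set u := (tau - 1)^-1.
have u0 : 0 < u by rewrite invr_gt0; lra.
have uu : u * (tau - 1) = 1 by rewrite mulVf // gt_eqF //; lra.
have u2 : u < 2^-1 by rewrite ltf_pV2 ?posrE; lra.
exists ((2^-1 - u) / 2); split; nra.
Qed.

Section Coupling.
Context {R : realType} {h : R -> R} {N : nat} {lam : 'I_N -> R}.
Hypothesis lam_gt0 : forall i, 0 < lam i.
Hypothesis h01 : forall x : R, 0 <= x -> 0 <= h x <= 1.

Lemma lN_muN : lN lam = muN lam * N%:R.
Proof.
have [N0|Npos] := posnP N; last by rewrite /muN divfK // pnatr_eq0 -lt0n.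
have -> : N%:R = 0 :> R by rewrite N0.
by rewrite mulr0 /lN big1 // => i; have := ltn_ord i; rewrite {2}N0.
Qed.

Lemma lN_gt0 (i : 'I_N) : 0 < lN lam.
Proof.
rewrite /lN (bigD1 i) //= ltr_pwDl // sumr_ge0 // => j _.
exact: ltW.
Qed.

Lemma lN_ge0 : 0 <= lN lam.
Proof. by rewrite sumr_ge0 // => i _; apply: ltW. Qed.

Lemma nuN_ge0 : 0 <= nuN lam.
Proof.
by rewrite divr_ge0 ?lN_ge0 ?sumr_ge0 // => i _; rewrite exprn_ge0 ?(ltW (lam_gt0 _)).
Qed.

Let t_ge0 i j : 0 <= lam i * lam j / lN lam.
Proof. by rewrite divr_ge0 ?lN_ge0 ?mulr_ge0 ?(ltW (lam_gt0 _)). Qed.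

Lemma pP_sym i j : pP lam i j = pP lam j i.
Proof. by rewrite /pP [lam i * _]mulrC. Qed.

Lemma pA_sym i j : pA h lam i j = pA h lam j i.
Proof. by rewrite /pA [lam i * _]mulrC. Qed.

Lemma pP_01 i j : 0 <= pP lam i j <= 1.
Proof.
rewrite /pP; have := expR_gt0 (- (lam i * lam j / lN lam)).
have : expR (- (lam i * lam j / lN lam)) <= 1 by rewrite expR_le1 oppr_le0.
move=> e1 e0; apply/andP; split; lra.
Qed.

Lemma sum_coup_weight i j : \sum_k coup_weight h lam i j k = 1.
Proof. by rewrite !big_ord_recr big_ord0 /= /coup_weight /=; lra. Qed.

Lemma sum_coup_weight_mismatch i j :
  \sum_k coup_weight h lam i j k * (mismatch k)%:R = `|pP lam i j - pA h lam i j|.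
Proof.
rewrite !big_ord_recr big_ord0 /= /coup_weight /mismatch /=.
rewrite !mulr0 !mulr1 add0r addr0.
by case: leP => pq; [rewrite ler0_norm ?subr_le0 | rewrite gtr0_norm ?subr_gt0]; lra.
Qed.

Lemma coup_weight_ge0 i j k : 0 <= coup_weight h lam i j k.
Proof.
have /andP[p0 p1] := pP_01 i j; have /andP[q0 q1] := h01 _ (t_ge0 i j).
rewrite /coup_weight; case: k => [[|[|[|m]]] _] /=.
- by rewrite le_min p0 q0.
- by rewrite subr_ge0 ge_min lexx.
- by rewrite subr_ge0 le_max lexx.
- by rewrite subr_ge0 ge_max p1 q1.
Qed.

Lemma config_weight_ge0 (w : config N) : 0 <= config_weight h lam w.
Proof. by apply: prodr_ge0 => x _; apply: coup_weight_ge0. Qed.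

Lemma expect_Kij i j : i != j ->
  \sum_(w : config N) config_weight h lam w * (Kij w i j)%:R =
  `|pP lam i j - pA h lam i j|.
Proof.
move=> ij; have [x [Kx xE]] := Kij_pairT ij.
under eq_bigr => w _ do rewrite Kx.
rewrite (sum_prod_ffun_coord (fun y k => coup_weight h lam (val y).1 (val y).2 k)
  (fun k => (mismatch k)%:R)) => [|y]; last exact: sum_coup_weight.
rewrite sum_coup_weight_mismatch.
by case: xE => -> //=; rewrite pP_sym pA_sym.
Qed.

(* Markov's inequality for the nonnegative integer sum defining A_N. *)
Lemma prob_Ac_le_sum_mismatch (c : R) :
  prob_Ac h lam c <=
  \sum_i ((c < lam i)%R : nat)%:R *
    \sum_(j | j != i) `|pP lam i j - pA h lam i j|.
Proof.
pose S (w : config N) : R :=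
  \sum_i ((c < lam i)%R : nat)%:R * \sum_(j | j != i) (Kij w i j)%:R.
have count_ge1 w : (~~ A_event lam c w)%:R <= S w.
  rewrite /A_event; set n := (\sum_i _)%N.
  have -> : S w = n%:R.
    by rewrite /S natr_sum; apply: eq_bigr => i _; rewrite natrM mulrC /Ki natr_sum.
  by case: n => [|n]; rewrite ?lexx // ler1n.
have expect_S : \sum_w config_weight h lam w * S w =
    \sum_i ((c < lam i)%R : nat)%:R *
      \sum_(j | j != i) `|pP lam i j - pA h lam i j|.
  rewrite /S; under eq_bigr => w _ do rewrite mulr_sumr.
  rewrite exchange_big /=; apply: eq_bigr => i _.
  under eq_bigr => w _ do rewrite mulrCA mulr_sumr.
  rewrite -mulr_sumr exchange_big /=; congr (_ * _).
  by apply: eq_bigr => j ji; rewrite expect_Kij // eq_sym.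
rewrite -expect_S; apply: ler_sum => w _.
by rewrite ler_wpM2l ?config_weight_ge0.
Qed.

Context {K : R}.
Hypothesis K_ge0 : 0 <= K.
Hypothesis K_bound : forall t, 0 < t -> `|(1 - expR (- t)) - h t| <= K * t ^+ 2.

Lemma prob_Ac_le_sq_sum (c : R) :
  prob_Ac h lam c <=
  K * nuN lam / lN lam * \sum_i ((c < lam i)%R : nat)%:R * lam i ^+ 2.
Proof.
apply: le_trans (prob_Ac_le_sum_mismatch c) _.
rewrite mulr_sumr; apply: ler_sum => i _.
have l0 := lN_gt0 i.
have ->: K * nuN lam / lN lam * (((c < lam i)%R : nat)%:R * lam i ^+ 2) =
    \sum_j ((c < lam i)%R : nat)%:R * (K * (lam i * lam j / lN lam) ^+ 2).
  rewrite -mulr_sumr.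
  transitivity (((c < lam i)%R : nat)%:R *
                (K * lam i ^+ 2 / lN lam ^+ 2 * \sum_j lam j ^+ 2)).
    by rewrite /nuN; field; rewrite gt_eqF.
  congr (_ * _); rewrite mulr_sumr; apply: eq_bigr => j _.
  by field; rewrite gt_eqF.
rewrite mulr_sumr [leRHS](bigD1 i) //= ler_wpDl //.
  by rewrite mulr_ge0 ?ler0n // mulr_ge0 // exprn_ge0 // t_ge0.
apply: ler_sum => j _; rewrite ler_wpM2l //.
by apply: K_bound; rewrite divr_gt0 ?mulr_gt0.
Qed.

Lemma prob_Ac_le_moment (c a : R) : 0 < c -> 2 <= a ->
  prob_Ac h lam c <=
  K * (nuN lam / muN lam) * c `^ (2 - a) * (N%:R^-1 * \sum_i lam i `^ a).
Proof.
move=> c0 a2; apply: le_trans (prob_Ac_le_sq_sum c) _.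
have -> : K * (nuN lam / muN lam) * c `^ (2 - a) *
    (N%:R^-1 * \sum_i lam i `^ a) = K * nuN lam / lN lam * (c `^ (2 - a) * \sum_i lam i `^ a).
  by rewrite lN_muN [(_ * N%:R)^-1]invfM; ring.
apply: ler_wpM2l.
  by rewrite mulr_ge0 ?invr_ge0 ?lN_ge0 // mulr_ge0 ?nuN_ge0.
by rewrite mulr_sumr; apply: ler_sum => i _; exact: indicator_sq_le_powR.
Qed.

End Coupling.

Lemma nuN_div_muN_eventually_le {R : realType} {lam : forall N : nat, 'I_N -> R}
    {mu nu C alpha : R} {N1 : nat} :
  (forall N (i : 'I_N), 0 < lam N i) -> 0 < mu -> 0 < alpha ->
  (forall N : nat, (N1 <= N)%N ->
     `|muN (lam N) - mu| <= C * N%:R `^ (- alpha) /\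
     `|nuN (lam N) - nu| <= C * N%:R `^ (- alpha)) ->
  exists N0 : nat, forall N : nat, (N0 <= N)%N ->
    0 <= nuN (lam N) / muN (lam N) <= (nu + 1) * (2 / mu).
Proof.
move=> lam_gt0 mu0 al0 C1; have mu2 : 0 < mu / 2 by rewrite divr_gt0.
have [N2 mu_close] := dist_eventually_le al0 (fun N hN => (C1 N hN).1) _ mu2.
have [N3 nu_close] := dist_eventually_le al0 (fun N hN => (C1 N hN).2) _ ltr01.
exists (maxn N2 N3) => N; rewrite geq_max => /andP[hN2 hN3].
have muN_ge : mu / 2 <= muN (lam N).
  by move: (mu_close N hN2); rewrite ler_norml => /andP[+ _]; lra.
have nuN_le : nuN (lam N) <= nu + 1.
  by move: (nu_close N hN3); rewrite ler_norml => /andP[_ +]; lra.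
have muN_gt0 : 0 < muN (lam N) := lt_le_trans mu2 muN_ge.
have nuN0 := nuN_ge0 (lam_gt0 N).
rewrite divr_ge0 ?(ltW muN_gt0) //=; apply: ler_pM => //.
  by rewrite invr_ge0 ltW.
by rewrite -invf_div lef_pV2 ?posrE.
Qed.

Theorem lemma2p1 (R : realType) (lam : forall N : nat, 'I_N -> R)
  (h : R -> R) :
  (* capacities positive *)
  (forall N (i : 'I_N), 0 < lam N i) ->
  (* (C1) *)
  (exists (mu nu alpha1 : R), 0 < mu /\ 1 < nu /\ 0 < alpha1 /\
     exists (C : R) (N0 : nat), forall N : nat, (N0 <= N)%N ->
       `|muN (lam N) - mu| <= C * (N%:R `^ (- alpha1)) /\
       `|nuN (lam N) - nu| <= C * (N%:R `^ (- alpha1))) ->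
  (* (C3) *)
  (exists tau : R, 3 < tau /\
     forall eps : R, 0 < eps -> (tau - 1)^-1 + eps < 2^-1 ->
       (exists (B : R) (N0 : nat), forall N : nat, (N0 <= N)%N ->
          N%:R^-1 * (\sum_(i < N) lam N i `^ (tau - 1 - eps)) <= B) /\
       (forall (N : nat) (i : 'I_N),
          lam N i <= N%:R `^ ((tau - 1)^-1 + eps))) ->
  (* (A2): h : [0,oo) -> [0,1] and h(x) - x = O(x^2) as x decreases to 0 *)
  (forall x : R, 0 <= x -> 0 <= h x <= 1) ->
  (exists (C delta : R), 0 < delta /\
     forall x : R, 0 < x -> x < delta -> `|h x - x| <= C * x ^+ 2) ->
  forall xi : R, 0 < xi ->
  exists theta : R, 0 < theta /\
    exists (C : R) (N0 : nat), forall N : nat, (N0 <= N)%N ->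
      prob_Ac h (lam N) (N%:R `^ xi) <= C * (N%:R `^ (- theta)).
Proof.
move=> lam_gt0 [mu [nu [al [mu0 [_ [al0 [Cm [N1 C1]]]]]]]] [tau [tau3 C3]]
  h01 A2 xi xi0.
have [eps [eps0 eps_lt a_gt2]] := exists_C3_margin tau3.
have [[B [N2 moment]] _] := C3 eps eps0 eps_lt.
have [K [K0 K_bound]] := expRN_sub_quadratic_bound h01 A2.
have [N3 ratio] := nuN_div_muN_eventually_le lam_gt0 mu0 al0 C1.
exists (xi * (tau - 1 - eps - 2)); split; first by rewrite mulr_gt0 // subr_gt0.
exists (K * ((nu + 1) * (2 / mu)) * B), (maxn (maxn N2 N3) 1).
move=> N; rewrite !geq_max => /andP[/andP[hN2 hN3] hN].
have N0 : 0 < N%:R :> R by rewrite ltr0n.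
have /andP[ratio_ge0 ratio_le] := ratio N hN3.
apply: le_trans (prob_Ac_le_moment (lam_gt0 N) h01 K0 K_bound
  (N%:R `^ xi) (tau - 1 - eps) (powR_gt0 _ N0) (ltW a_gt2)) _.
rewrite -powRrM (_ : xi * (2 - (tau - 1 - eps)) = - (xi * (tau - 1 - eps - 2)));
  last by ring.
rewrite [leRHS]mulrAC; apply: ler_pM.
- by rewrite mulr_ge0 ?powR_ge0 // mulr_ge0.
- by rewrite mulr_ge0 ?invr_ge0 ?sumr_ge0 // => i _; rewrite powR_ge0.
- by rewrite ler_wpM2r ?powR_ge0 // ler_wpM2l.
- exact: moment.
Qed.
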